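(* In the setting below, under the persistent excitation assumption and the inexact disturbance bound assumption, the minimal parameter set $\Theta_t=\Theta_0\cap\bigcap_{j=1}^t\Delta_j$ converges with probability 1 to a set $\Theta_\infty=\bigcap_{t\ge0}\Theta_t$ satisfying $\Theta_\infty\subseteq\{\theta\in\mathbb{R}^p:\|\theta-\theta^\ast\|\le\rho\sqrt{N_u/\beta}\}$.
   Context: Setting: $\theta^\ast\in\mathbb{R}^p$ is a fixed (unknown) parameter vector. $\Theta_0\subset\mathbb{R}^p$ is a compact convex polytope containing $\theta^\ast$. $\mathcal{W}=\{w\in\mathbb{R}^{n_x}:\Pi_w w\le\pi_w\}$ is a compact convex polytope with $\pi_w>0$. The disturbances $w_0,w_1,\dots$ are independent random vectors in $\mathbb{R}^{n_x}$. $D_0,D_1,\dots\in\mathbb{R}^{n_x\times p}$ is a given (non-random) sequence of regressor matrices. For $t\ge1$ the (random) unfalsified parameter set is $\Delta_t=\{\theta\in\mathbb{R}^p: D_{t-1}(\theta^\ast-\theta)+w_{t-1}\in\mathcal{W}\}$. $\|\cdot\|$ is the Euclidean norm (induced 2-norm for matrices); $\mathcal{B}=\{x\in\mathbb{R}^{n_x}:\|x\|\le1\}$; $\oplus$ is Minkowski sum. Persistent excitation assumption: there exist $\tau>0$, $\beta>0$ and an integer $N_u\ge\lceil p/n_x\rceil$ such that for every $t\ge0$, $\|D_t\|\le\tau$ and $\sum_{j=t}^{t+N_u-1}D_j^\top D_j\succeq\beta I$. Inexact disturbance bound assumption: there exist a compact set $\Omega\subset\mathbb{R}^{n_x}$ and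 $\rho>0$ with $\Omega\subseteq\mathcal{W}\subseteq\Omega\oplus\rho\mathcal{B}$, such that $w_t\in\Omega$ for all $t$, and a function $p_w:(0,\infty)\to(0,1]$ such that for all $w^0\in\partial\Omega$ (boundary of $\Omega$), all $\epsilon>0$ and all $t\ge0$, $\Pr\{\|w_t-w^0\|<\epsilon\}\ge p_w(\epsilon)$. *)

From HB Require Import structures.
From mathcomp Require Import all_boot all_order all_algebra.
From mathcomp Require Import all_classical all_reals all_analysis.
Set Implicit Arguments. Unset Strict Implicit. Unset Printing Implicit Defensive.
Import Order.TTheory GRing.Theory Num.Theory.
Import numFieldNormedType.Exports.
Local Open Scope classical_set_scope.
Local Open Scope ring_scope.

Section Defs.
Variable R : realType.

Definition enorm n (x : 'cV[R]_n) : R := Num.sqrt (\sum_i (x i 0) ^+ 2).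

(* ||A|| <= c for the induced 2-norm (spelled out: sup_x ||Ax||/||x|| <= c) *)
Definition opnorm_le m n (A : 'M[R]_(m, n)) (c : R) : Prop :=
  forall x : 'cV[R]_n, enorm (A *m x) <= c * enorm x.

Definition loewner_le n (A B : 'M[R]_n) : Prop :=
  forall x : 'cV[R]_n, (x^T *m A *m x) 0 0 <= (x^T *m B *m x) 0 0.

Definition unit_ball n : set 'cV[R]_n := [set x | enorm x <= 1].

Definition minkowski_ball n (A : set 'cV[R]_n) (r : R) : set 'cV[R]_n :=
  [set a + r *: b | a in A & b in @unit_ball n].

Definition hpoly m n (A : 'M[R]_(m, n)) (b : 'cV[R]_m) : set 'cV[R]_n :=
  [set x | forall i, (A *m x) i 0 <= b i 0].

(* compact convex polytope = compact H-polyhedron (automatically convex) *)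
Definition compact_polytope n (S : set 'cV[R]_n) : Prop :=
  (exists m (A : 'M[R]_(m, n)) (b : 'cV[R]_m), S = hpoly A b) /\ compact S.

Definition boundary n (S : set 'cV[R]_n) : set 'cV[R]_n :=
  closure S `\` interior S.

Definition vborel n : set (set 'cV[R]_n) := <<s [set U | open U] >>.

Definition hausdorff_cvg n (S : nat -> set 'cV[R]_n) (L : set 'cV[R]_n) : Prop :=
  forall e : R, 0 < e -> exists T : nat, forall t, (T <= t)%N ->
    S t `<=` minkowski_ball L e /\ L `<=` minkowski_ball (S t) e.

End Defs.

Section Prob.
Variables (d : measure_display) (T : measurableType d) (R : realType).

Definition random_vector n (X : T -> 'cV[R]_n) : Prop :=
  forall B, vborel B -> measurable (X @^-1` B).

Definition mutually_independent (P : probability T R) n (w : nat -> T -> 'cV[R]_n) :=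
  forall (s : seq nat) (B : nat -> set 'cV[R]_n), uniq s ->
    (forall i, vborel (B i)) ->
    P (\bigcap_(i in [set` s]) (w i @^-1` B i)) =
    (\prod_(i <- s) P (w i @^-1` B i))%E.

End Prob.

(* unfalsified parameter set Delta_t, t >= 1 *)
Definition Delta (R : realType) T nx p (D : nat -> 'M[R]_(nx, p)) (W : set 'cV[R]_nx)
  (w : nat -> T -> 'cV[R]_nx) (thetastar : 'cV[R]_p) (t : nat) (om : T) : set 'cV[R]_p :=
  [set theta | W (D t.-1 *m (thetastar - theta) + w t.-1 om)].

Definition Theta (R : realType) T nx p (Theta0 : set 'cV[R]_p) (D : nat -> 'M[R]_(nx, p))
  (W : set 'cV[R]_nx) (w : nat -> T -> 'cV[R]_nx) (thetastar : 'cV[R]_p)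
  (t : nat) (om : T) : set 'cV[R]_p :=
  Theta0 `&` [set theta | forall j, (1 <= j <= t)%N -> Delta D W w thetastar j om theta].

Definition Theta_inf (R : realType) T nx p (Theta0 : set 'cV[R]_p) (D : nat -> 'M[R]_(nx, p))
  (W : set 'cV[R]_nx) (w : nat -> T -> 'cV[R]_nx) (thetastar : 'cV[R]_p)
  (om : T) : set 'cV[R]_p :=
  \bigcap_(t in [set: nat]) Theta Theta0 D W w thetastar t om.

From HB Require Import structures.
From mathcomp Require Import all_boot all_order all_algebra.
From mathcomp Require Import all_classical all_reals all_analysis.
From mathcomp Require Import ring lra zify.
Import Order.TTheory GRing.Theory Num.Theory.
Import numFieldNormedType.Exports.
Local Open Scope classical_set_scope.
Local Open Scope ring_scope.
Set Implicit Arguments. Unset Strict Implicit. Unset Printing Implicit Defensive.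

(* Almost surely, for every rational direction q and every radius r > 0 some block
   of N_u consecutive disturbances w_j all lie within r of the point of Om that
   maximises <D_j q, .>: the blocks are independent and each has probability at
   least p_w(r)^N_u, so never meeting such a block is a null event.  For theta in
   Theta_inf and v = thetastar - theta, D_j v + w_j lies in W, inside Om (+) rho B;
   comparing with the supporting hyperplane of Om gives |D_j v| <= rho + r + 2 tau |v - q|
   on that block, and persistent excitation then yields beta |v|^2 <= N_u (rho + eps)^2.
   Convergence of Theta_t holds for every outcome: the Theta_t are a decreasing
   sequence of closed subsets of the compact Theta_0. *)

Lemma decr_setS (X : Type) (S : nat -> set X) : (forall t, S t.+1 `<=` S t) ->
  forall s t, (s <= t)%N -> S t `<=` S s.
Proof.
move=> S_decr s; elim=> [|t IH]; first by rewrite leqn0 => /eqP ->.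
rewrite leq_eqVlt => /orP [/eqP -> //|/IH]; exact: subset_trans (S_decr t).
Qed.

Lemma set_seq_cat (I : eqType) (s t : seq I) : [set` s ++ t] = [set` s] `|` [set` t].
Proof. by apply/seteqP; split => x /=; rewrite mem_cat => /orP. Qed.

Section Euclid.
Variables (R : realType) (n : nat).
Implicit Types (x y z : 'cV[R]_n) (K : set 'cV[R]_n).

Definition dot x y : R := \sum_i x i 0 * y i 0.

Lemma dotC x y : dot x y = dot y x.
Proof. by apply: eq_bigr => i _; rewrite mulrC. Qed.

Lemma dot0l y : dot 0 y = 0.
Proof. by rewrite /dot big1 // => i _; rewrite mxE mul0r. Qed.

Lemma dotDr x y z : dot x (y + z) = dot x y + dot x z.
Proof. by rewrite /dot -big_split; apply: eq_bigr => i _; rewrite mxE mulrDr. Qed.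

Lemma dotZr x y (c : R) : dot x (c *: y) = c * dot x y.
Proof. by rewrite /dot mulr_sumr; apply: eq_bigr => i _; rewrite mxE mulrCA. Qed.

Lemma dotNr x y : dot x (- y) = - dot x y.
Proof. by rewrite -scaleN1r dotZr mulN1r. Qed.

Lemma dotBr x y z : dot x (y - z) = dot x y - dot x z.
Proof. by rewrite dotDr dotNr. Qed.

Lemma dotDl x y z : dot (x + y) z = dot x z + dot y z.
Proof. by rewrite dotC dotDr !(dotC z). Qed.

Lemma dotZl x y (c : R) : dot (c *: x) y = c * dot x y.
Proof. by rewrite dotC dotZr dotC. Qed.

Lemma dotNl x y : dot (- x) y = - dot x y.
Proof. by rewrite dotC dotNr dotC. Qed.

Lemma dotBl x y z : dot (x - y) z = dot x z - dot y z.
Proof. by rewrite dotC dotBr !(dotC z). Qed.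

Lemma dot_ge0 x : 0 <= dot x x.
Proof. by apply: sumr_ge0 => i _; rewrite -expr2 sqr_ge0. Qed.

Lemma enorm_ge0 x : 0 <= enorm x.
Proof. exact: sqrtr_ge0. Qed.

Lemma enorm_sqr x : enorm x ^+ 2 = dot x x.
Proof. by rewrite sqr_sqrtr ?dot_ge0 //; apply: eq_bigr => i _; rewrite expr2. Qed.

Lemma enormZ x (c : R) : enorm (c *: x) = `|c| * enorm x.
Proof.
rewrite /enorm -(sqrtr_sqr c) -sqrtrM ?sqr_ge0 //; congr Num.sqrt.
by rewrite mulr_sumr; apply: eq_bigr => i _; rewrite mxE exprMn.
Qed.

Lemma enormN x : enorm (- x) = enorm x.
Proof. by rewrite -scaleN1r enormZ normrN1 mul1r. Qed.

Lemma enormB x y : enorm (x - y) = enorm (y - x).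
Proof. by rewrite -enormN opprB. Qed.

Lemma enorm0 : enorm (0 : 'cV[R]_n) = 0.
Proof. by rewrite -(scale0r 0) enormZ normr0 mul0r. Qed.

Lemma normr_entry_le_enorm x i : `|x i 0| <= enorm x.
Proof.
rewrite -sqrtr_sqr ler_sqrt ?dot_ge0 //.
by rewrite (bigD1 i) //= ler_wpDr //; apply: sumr_ge0 => k _; exact: sqr_ge0.
Qed.

Lemma enorm_eq0 x : enorm x = 0 -> x = 0.
Proof.
move=> x0; apply/matrixP => i j; rewrite (ord1 j) mxE; apply/normr0_eq0.
by apply/le_anti; rewrite normr_ge0 -x0 normr_entry_le_enorm.
Qed.

Lemma dot_le_enorm x y : dot x y <= enorm x * enorm y.
Proof.
set a := enorm x; set b := enorm y.
have [/enorm_eq0 ->|a_neq0] := eqVneq a 0; first by rewrite dot0l mulr_ge0 ?enorm_ge0.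
have [/enorm_eq0 ->|b_neq0] := eqVneq b 0; first by rewrite dotC dot0l mulr_ge0 ?enorm_ge0.
have ab_gt0 : 0 < a * b by rewrite mulr_gt0 // lt_def ?a_neq0 ?b_neq0 enorm_ge0.
have := dot_ge0 (b *: x - a *: y).
rewrite !dotBl !dotBr !dotZl !dotZr -!enorm_sqr (dotC y x) -/a -/b => h.
by rewrite -subr_ge0 -(pmulr_rge0 _ ab_gt0); nra.
Qed.

Lemma normr_dot_le x y : `|dot x y| <= enorm x * enorm y.
Proof. by rewrite ler_norml dot_le_enorm lerNl -dotNl -(enormN x) dot_le_enorm. Qed.

Lemma ler_enormD x y : enorm (x + y) <= enorm x + enorm y.
Proof.
rewrite -(ler_pXn2r (_ : 0 < 2)%N) ?nnegrE ?addr_ge0 ?enorm_ge0 //.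
rewrite enorm_sqr dotDl !dotDr -!enorm_sqr (dotC y x).
have := dot_le_enorm x y; nra.
Qed.

Lemma enorm_lt_entries (e : R) : 0 < e -> exists2 c : R, 0 < c &
  forall x, (forall i, `|x i 0| <= c) -> enorm x < e.
Proof.
move=> e_gt0; set c := e / n.+1%:R.
have c_gt0 : 0 < c by rewrite divr_gt0.
exists c => // x hx; rewrite -[e]gtr0_norm // -sqrtr_sqr ltr_sqrt ?exprn_gt0 //.
apply: (@le_lt_trans _ _ (n%:R * c ^+ 2)).
  rewrite -[n in n%:R]card_ord -sum1_card natr_sum mulr_suml.
  apply: ler_sum => i _; rewrite mul1r -real_normK ?num_real //.
  by rewrite lerXn2r ?nnegrE ?normr_ge0 ?(ltW c_gt0) ?hx.
have -> : e = n.+1%:R * c by rewrite mulrC divfK.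
rewrite -natr1; have := ler0n R n; nra.
Qed.

Lemma exists_rat_near x (e : R) : 0 < e ->
  exists q : 'cV[rat]_n, enorm (x - map_mx ratr q) < e.
Proof.
move=> e_gt0; have [c c_gt0 hc] := enorm_lt_entries e_gt0.
have lt_x i : x i 0 - c < x i 0 by rewrite ltrBlDr ltrDl.
exists (\col_i sval (cid (rat_in_itvoo (lt_x i)))); apply: hc => i; rewrite !mxE.
case: cid => q /=; rewrite in_itv /= => /andP [? ?].
by rewrite ger0_norm ?subr_ge0 ?ltW //; lra.
Qed.

Lemma nbhs_enorm_lt x (e : R) : 0 < e -> \forall z \near x, enorm (z - x) < e.
Proof.
move=> e_gt0; have [c c_gt0 hc] := enorm_lt_entries e_gt0.
apply/nbhs_ballP; exists c => // z [_ xz]; apply: hc => i.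
by have := xz i 0; rewrite /ball /= !mxE distrC => /ltW.
Qed.

Lemma continuous_dot y : continuous (dot y).
Proof.
move=> x; have x_filter : Filter (nbhs x) by exact: nbhs_filter.
apply/cvgrPdist_lt => e e_gt0.
have k_gt0 : 0 < enorm y + 1 by rewrite ltr_wpDl ?enorm_ge0.
apply: filterS (nbhs_enorm_lt x (divr_gt0 e_gt0 k_gt0)) => z /= xz.
rewrite -dotBr -normrN -dotNr opprB; apply: le_lt_trans (normr_dot_le _ _) _.
have -> : e = (enorm y + 1) * (e / (enorm y + 1)) by rewrite mulrC divfK ?lt0r_neq0.
by apply: ltr_pM; rewrite ?enorm_ge0 ?ltrDl.
Qed.

Lemma mulmx_dot m (A : 'M[R]_(m, n)) x i : (A *m x) i 0 = dot (row i A)^T x.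
Proof. by rewrite mxE; apply: eq_bigr => k _; rewrite !mxE. Qed.

Lemma closed_hpoly m (A : 'M[R]_(m, n)) (b : 'cV[R]_m) : closed (hpoly A b).
Proof.
have -> : hpoly A b = \bigcap_(i in setT) (dot (row i A)^T @^-1` [set r | r <= b i 0]).
  apply/seteqP; split => x /= h i; last by rewrite mulmx_dot; exact: h.
  by rewrite /= -mulmx_dot.
apply: closed_bigI => i _.
by apply: preimage_closed; [move=> x _; exact: continuous_dot | exact: closed_le].
Qed.

Lemma open_enorm_lt x (e : R) : open [set z | enorm (z - x) < e].
Proof.
rewrite openE => z /= zx; have e_gt0 : 0 < e - enorm (z - x) by rewrite subr_gt0.
apply: filterS (nbhs_enorm_lt z e_gt0) => u /= uz.
have := ler_enormD (u - z) (z - x); rewrite addrA subrK; lra.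
Qed.

Definition support_point K y : 'cV[R]_n :=
  xget 0 [set s | K s /\ forall a, K a -> dot y a <= dot y s].

Lemma support_pointP K y : K !=set0 -> compact K ->
  K (support_point K y) /\ forall a, K a -> dot y a <= dot y (support_point K y).
Proof.
move=> K0 cK; apply: (@xgetPex _ 0 [set s | K s /\ forall a, K a -> dot y a <= dot y s]).
have [s Ks hs] := compact_EVT_max K0 cK (continuous_subspaceT (continuous_dot (y := y))).
by exists s; split=> [|a Ka]; [move: Ks | apply: hs]; rewrite inE.
Qed.

Lemma support_point_boundary K y : K !=set0 -> compact K -> 0 < enorm y ->
  boundary K (support_point K y).
Proof.
move=> K0 cK y_gt0; have [Ks smax] := support_pointP y K0 cK.
split; first exact: subset_closure.
move=> /nbhs_ballP [e /= e_gt0 he].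
have k_gt0 : 0 < enorm y + 1 by rewrite ltr_wpDl ?enorm_ge0.
set t := e / (enorm y + 1); have t_gt0 : 0 < t by rewrite divr_gt0.
have /smax : K (support_point K y + t *: y).
  apply: he; split => // i j; rewrite (ord1 j) /ball /= !mxE opprD addrA subrr.
  rewrite add0r normrN normrM (gtr0_norm t_gt0).
  apply: le_lt_trans (ler_wpM2l (ltW t_gt0) (normr_entry_le_enorm y i)) _.
  by rewrite /t mulrAC ltr_pdivrMr // ltr_pM2l // ltrDl.
by rewrite dotDr dotZr -enorm_sqr gerDl leNgt mulr_gt0 ?exprn_gt0.
Qed.

(* For [y = 0] the support point need not lie on the boundary of [K], so the event
   is made trivial. *)
Definition near_support K y (r : R) : set 'cV[R]_n :=
  if enorm y == 0 then setT else [set x | enorm (x - support_point K y) < r].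

Lemma vborel_near_support K y r : vborel (near_support K y r).
Proof.
by rewrite /near_support; case: ifP => _; apply: sub_sigma_algebra;
  [exact: openT | exact: open_enorm_lt].
Qed.

(* Comparing [a + u] and [u] with the supporting hyperplane of [K] in direction [y]
   bounds [dot y a] by [(rho + r) * enorm y], and [a] is close to [y]. *)
Lemma enorm_le_near_support K y a u (rho r kap : R) : K !=set0 -> compact K ->
  0 <= rho -> 0 <= r -> minkowski_ball K rho (a + u) -> near_support K y r u ->
  enorm (a - y) <= kap -> enorm a <= rho + r + 2 * kap.
Proof.
move=> K0 cK rho_ge0 r_ge0 [k Kk [e e_ball ke]] u_near ay.
have [Ks smax] := support_pointP y K0 cK; set s := support_point K y in Ks smax u_near.
have y_ge0 := enorm_ge0 y.
have au_le : dot y (a + u) <= dot y s + rho * enorm y.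
  rewrite -ke dotDr dotZr; apply: lerD; first exact: smax.
  apply: ler_wpM2l => //; apply: le_trans (dot_le_enorm _ _) _.
  by rewrite -[leRHS]mulr1 ler_wpM2l.
have u_ge : dot y s - r * enorm y <= dot y u.
  move: u_near; rewrite /near_support; case: eqP => [/enorm_eq0 -> _ | _ us].
    by rewrite !dot0l enorm0 mulr0 subr0.
  have := normr_dot_le y (u - s); rewrite dotBr ler_norml => /andP [+ _].
  have : enorm y * enorm (u - s) <= enorm y * r by rewrite ler_wpM2l // ltW.
  lra.
have a_ge : enorm y ^+ 2 - enorm y * kap <= dot y a.
  have := normr_dot_le y (a - y); rewrite dotBr -enorm_sqr ler_norml => /andP [+ _].
  have : enorm y * enorm (a - y) <= enorm y * kap by rewrite ler_wpM2l.
  lra.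
have y_le : enorm y <= rho + r + kap.
  have : enorm y * (enorm y - (rho + r + kap)) <= 0 by move: au_le; rewrite dotDr; lra.
  have ay_ge0 := enorm_ge0 (a - y); nra.
have := ler_enormD y (a - y); rewrite addrC subrK; lra.
Qed.

Lemma hausdorff_cvg_bigcap (S : nat -> set 'cV[R]_n) K : compact K ->
  (forall t, closed (S t)) -> (forall t, S t `<=` K) ->
  (forall t, S t.+1 `<=` S t) -> hausdorff_cvg S (\bigcap_(t in setT) S t).
Proof.
move=> cK S_closed SK S_decr e e_gt0; set L := \bigcap_(t in setT) S t.
have L_near t : L `<=` minkowski_ball (S t) e.
  move=> x Lx; exists x; first exact: Lx.
  by exists 0; rewrite ?scaler0 ?addr0 // /unit_ball /= enorm0.
suff [T0 hT0] : exists T0, forall t, (T0 <= t)%N -> S t `<=` minkowski_ball L e.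
  by exists T0 => t tT; split; [exact: hT0 | exact: L_near].
apply: contrapT => far.
set G := [set x | forall y, L y -> e < enorm (x - y)].
have far_G x : ~ minkowski_ball L e x -> G x.
  move=> nLx y Ly; rewrite ltNge; apply/negP => xy; apply: nLx.
  exists y => //; exists (e^-1 *: (x - y)).
    by rewrite /unit_ball /= enormZ gtr0_norm ?invr_gt0 // ler_pdivrMl // mulr1.
  by rewrite scalerA divff ?gt_eqF // scale1r addrC subrK.
have SG t : exists x, S t x /\ G x.
  apply: contrapT => nSG; apply: far; exists t => s ts x Sx.
  apply: contrapT => nLx; apply: nSG; exists x; split; last exact: far_G.
  exact: (decr_setS S_decr ts).
(* A cluster point of the nested nonempty compact sets [S t `&` closure G]
   lies in [L] and in [closure G], which is impossible. *)
pose C t := S t `&` closure G.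
have C_filter : ProperFilter (filter_from setT C).
  apply: filter_from_proper; last first.
    by move=> t _; have [x [Sx Gx]] := SG t; exists x; split => //; exact: subset_closure.
  apply: filter_from_filter; first by exists 0%N.
  move=> i j _ _; exists (maxn i j) => // x [Sx Gx].
  by split; split => //; apply: (decr_setS S_decr _ Sx); rewrite ?leq_maxl ?leq_maxr.
have [z [_ clz]] := cK _ C_filter (ex_intro2 _ _ 0%N I (fun x (h : C 0%N x) => SK 0%N x h.1)).
have Cz t : C t z.
  have -> : C t = closure (C t).
    exact/closure_id/(closedI (S_closed t) (@closed_closure _ G)).
  by move=> B nB; apply: clz => //; exists t.
have [g [Gg gz]] := (Cz 0%N).2 _ (nbhs_enorm_lt z e_gt0).
by have := Gg z (fun t _ => (Cz t).1); rewrite ltNge (ltW gz).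
Qed.

End Euclid.

Lemma negligible_bigcup_countable d (T : measurableType d) (R : realType)
    (mu : {measure set T -> \bar R}) (I : countType) (F : I -> set T) :
  (forall i, mu.-negligible (F i)) -> mu.-negligible (\bigcup_i F i).
Proof.
move=> F0; apply: (@negligibleS _ _ _ _ (\bigcup_k oapp F set0 (unpickle k))).
  by move=> x [i _ Fix]; exists (pickle i) => //; rewrite /= pickleK.
apply: negligible_bigcup => k; case: unpickle => [i|] /=; first exact: F0.
exact: negligible_set0.
Qed.

Section IndependentBlocks.
Variables (d : measure_display) (T : measurableType d) (R : realType).
Variables (P : probability T R) (nx : nat) (w : nat -> T -> 'cV[R]_nx).
Variables (B : nat -> set 'cV[R]_nx) (N : nat).
Hypothesis w_rv : forall t, random_vector (w t).
Hypothesis w_indep : mutually_independent P w.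
Hypothesis B_borel : forall j, vborel (B j).

Definition joint_event (s : seq nat) : set T := \bigcap_(j in [set` s]) w j @^-1` B j.

Definition block_event b := joint_event (iota (b * N) N).

Fixpoint no_block_before n : set T :=
  if n is n'.+1 then no_block_before n' `&` ~` block_event n' else setT.

Lemma joint_event_cat s t : joint_event (s ++ t) = joint_event s `&` joint_event t.
Proof. by rewrite /joint_event set_seq_cat bigcap_setU. Qed.

Lemma measurable_joint_event s : measurable (joint_event s).
Proof.
by rewrite /joint_event; apply: bigcap_measurableType => j _; apply: w_rv.
Qed.

Lemma measurable_block_event b : measurable (block_event b).
Proof. exact: measurable_joint_event. Qed.

Lemma measurable_no_block_before n : measurable (no_block_before n).
Proof.
elim: n => //= n IH; apply: measurableI => //.
exact/measurableC/measurable_block_event.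
Qed.

Let pr (X : set T) : R := fine (P X).

Let prE X : measurable X -> P X = (pr X)%:E.
Proof. by move=> mX; rewrite /pr fineK // fin_num_measure. Qed.

Let pr_ge0 X : 0 <= pr X.
Proof. by rewrite /pr fine_ge0 // measure_ge0. Qed.

Let pr_le1 X : measurable X -> pr X <= 1.
Proof. by move=> mX; rewrite -lee_fin -prE // probability_le1. Qed.

Let pr_joint_event s : uniq s -> pr (joint_event s) = \prod_(j <- s) pr (w j @^-1` B j).
Proof.
move=> s_uniq; have := w_indep s_uniq B_borel.
rewrite (eq_bigr (fun j => (pr (w j @^-1` B j))%:E)); last first.
  by move=> j _; rewrite prE //; exact: w_rv.
rewrite prodEFin -/(joint_event s) prE; last exact: measurable_joint_event.
by case.
Qed.

(* Induction on [n], generalised over joint events [s] living after the first [n]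
   blocks: independence splits [block_event n] off the joint event. *)
Let pr_joint_no_block n s : uniq s -> all (fun j => n * N <= j)%N s ->
  pr (joint_event s `&` no_block_before n) =
  pr (joint_event s) * \prod_(k < n) (1 - pr (block_event k)).
Proof.
elim: n s => [|n IH] s s_uniq s_late; first by rewrite /= setIT big_ord0 mulr1.
have -> : no_block_before n.+1 = no_block_before n `&` ~` block_event n by [].
rewrite setIA -setDE big_ord_recr /=.
have mX : measurable (joint_event s `&` no_block_before n).
  exact: measurableI (measurable_joint_event s) (measurable_no_block_before n).
rewrite /pr (measureD mX (measurable_block_event n)) ?ltey_eq ?fin_num_measure //.
rewrite fineB ?fin_num_measure //; last exact: measurableI (measurable_block_event n).
rewrite -!/(pr _) (setIC _ (block_event n)) setIA (setIC (block_event n)) -joint_event_cat.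
have sn_uniq : uniq (s ++ iota (n * N) N).
  rewrite cat_uniq s_uniq iota_uniq andbT; apply/hasPn => j /=; rewrite mem_iota => jn.
  by apply/negP => /(allP s_late); lia.
have s_late' : all (fun j => n * N <= j)%N s.
  by apply/allP => j /(allP s_late); lia.
have sn_late : all (fun j => n * N <= j)%N (s ++ iota (n * N) N).
  by rewrite all_cat s_late'; apply/allP => j; rewrite mem_iota; lia.
rewrite (IH s s_uniq s_late') (IH _ sn_uniq sn_late) (pr_joint_event sn_uniq) big_cat /=.
by rewrite -(pr_joint_event s_uniq) -pr_joint_event ?iota_uniq //; ring.
Qed.

Let pr_no_block_before n : pr (no_block_before n) = \prod_(k < n) (1 - pr (block_event k)).
Proof.
have := @pr_joint_no_block n [::] isT isT.
have -> : joint_event [::] = setT by rewrite /joint_event set_nil bigcap_set0.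
by rewrite setTI /pr probability_setT mul1r.
Qed.

Lemma never_block_negligible (c : R) : 0 < c ->
  (forall j, (c%:E <= P (w j @^-1` B j))%E) ->
  P.-negligible (\bigcap_b ~` block_event b).
Proof.
move=> c_gt0 hc; set never := \bigcap_b ~` block_event b.
have m_never : measurable never.
  by apply: bigcapT_measurable => b; exact/measurableC/measurable_block_event.
exists never; split => //.
have c_pr j : c <= pr (w j @^-1` B j) by rewrite -lee_fin -prE //; apply: w_rv.
have c_le1 : c <= 1 by apply: le_trans (c_pr 0%N) (pr_le1 _); apply: w_rv.
have block_ge b : c ^+ N <= pr (block_event b).
  rewrite pr_joint_event ?iota_uniq // (_ : iota _ _ = index_iota (b * N) (b * N + N)).
    rewrite -[N in c ^+ N](addKn (b * N)) -prodr_const_nat.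
    by apply: ler_prod => j _; rewrite (ltW c_gt0) c_pr.
  by rewrite /index_iota addKn.
have never_sub n : never `<=` no_block_before n.
  by elim: n => [|n IH] x //= never_x; split; [exact: IH | exact: never_x].
have never_le n : pr never <= (1 - c ^+ N) ^+ n.
  have m_before := measurable_no_block_before n.
  apply: (@le_trans _ _ (pr (no_block_before n))).
    by rewrite fine_le ?fin_num_measure //; apply: le_measure; rewrite ?inE.
  rewrite pr_no_block_before -[n in _ ^+ n]card_ord -prodr_const.
  apply: ler_prod => k _; rewrite subr_ge0 lerD2l lerN2 block_ge andbT.
  exact/pr_le1/measurable_block_event.
have cN_in : `|1 - c ^+ N| < 1.
  have := exprn_gt0 N c_gt0; have := exprn_ile1 N (ltW c_gt0) c_le1.
  by move=> ? ?; rewrite ger0_norm; lra.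
rewrite prE //; congr (_%:E); apply/le_anti; rewrite pr_ge0 andbT.
by apply: (cvgr_to_ge (cvg_expr cN_in)); apply: nearW.
Qed.

End IndependentBlocks.

Lemma trmx_mul_dot (R : realType) n (x y : 'cV[R]_n) : (x^T *m y) 0 0 = dot x y.
Proof. by rewrite mxE; apply: eq_bigr => i _; rewrite mxE. Qed.

Lemma quadform_scalar (R : realType) n (a : R) (v : 'cV[R]_n) :
  (v^T *m a%:M *m v) 0 0 = a * enorm v ^+ 2.
Proof. by rewrite mul_mx_scalar -scalemxAl mxE trmx_mul_dot enorm_sqr. Qed.

Lemma quadform_gram (R : realType) m n (A : 'M[R]_(m, n)) (v : 'cV[R]_n) :
  (v^T *m (A^T *m A) *m v) 0 0 = enorm (A *m v) ^+ 2.
Proof. by rewrite enorm_sqr -trmx_mul_dot trmx_mul !mulmxA. Qed.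

Section Identification.
Variables (R : realType) (nx p : nat) (D : nat -> 'M[R]_(nx, p)) (N : nat).
Variables (tau beta rho : R) (Om W : set 'cV[R]_nx).
Hypotheses (Om0 : Om !=set0) (Om_compact : compact Om).
Hypotheses (W_sub : W `<=` minkowski_ball Om rho) (rho_ge0 : 0 <= rho).
Hypotheses (tau_gt0 : 0 < tau) (beta_gt0 : 0 < beta).
Hypothesis D_le : forall t, opnorm_le (D t) tau.
Hypothesis D_pe : forall t, loewner_le beta%:M (\sum_(t <= j < t + N) (D j)^T *m D j).

Lemma pe_enorm_le t v (c : R) : 0 <= c ->
  (forall j, (t <= j < t + N)%N -> enorm (D j *m v) <= c) ->
  enorm v <= Num.sqrt (N%:R / beta) * c.
Proof.
move=> c_ge0 Dv_le.
have : beta * enorm v ^+ 2 <= N%:R * c ^+ 2.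
  have := D_pe t v; rewrite quadform_scalar mulmx_sumr mulmx_suml summxE => /le_trans; apply.
  have -> : N%:R * c ^+ 2 = \sum_(t <= j < t + N) c ^+ 2.
    by rewrite sumr_const_nat addKn mulr_natl.
  apply: ler_sum_nat => j jt.
  by rewrite quadform_gram lerXn2r ?nnegrE ?enorm_ge0 ?Dv_le.
move=> v_le; rewrite -(ler_pXn2r (isT : (0 < 2)%N)) ?nnegrE ?mulr_ge0 ?sqrtr_ge0 ?enorm_ge0 //.
rewrite exprMn (@sqr_sqrtr _ (N%:R / beta)); last by rewrite divr_ge0 // ltW.
by rewrite mulrAC ler_pdivlMr // mulrC.
Qed.

(* Rational directions and radii [1/(k+1)] keep this a countable family of events. *)
Definition excited (u : nat -> 'cV[R]_nx) : Prop :=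
  forall (q : 'cV[rat]_p) (k : nat), exists b, forall j, j \in iota (b * N) N ->
    near_support Om (D j *m map_mx ratr q) k.+1%:R^-1 (u j).

Lemma excited_enorm_le u v : excited u -> (forall j, W (D j *m v + u j)) ->
  enorm v <= Num.sqrt (N%:R / beta) * rho.
Proof.
move=> u_exc Wv; set c := Num.sqrt (N%:R / beta).
have c_ge0 : 0 <= c by exact: sqrtr_ge0.
suff v_le del : 0 < del -> enorm v <= c * (rho + del).
  apply/ler_addgt0Pr => e e_gt0; have c1_gt0 : 0 < c + 1 by rewrite ltr_wpDl.
  apply: le_trans (v_le _ (divr_gt0 e_gt0 c1_gt0)) _.
  rewrite mulrDr lerD2l mulrA ler_pdivrMr //; nra.
move=> del_gt0.
have [k k_le] : exists k : nat, k.+1%:R^-1 <= del / 2.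
  exists (Num.truncn (2 / del)); rewrite -[del / 2]invf_div lef_pV2 ?posrE ?divr_gt0 //.
  by apply: ltW; rewrite -truncn_lt_nat ?divr_ge0 ?ltW.
have eta_gt0 : 0 < del / (4 * tau) by rewrite divr_gt0 ?mulr_gt0.
have [q vq] := exists_rat_near v eta_gt0.
have [b ub] := u_exc q k.
apply: (pe_enorm_le (t := b * N)) => [|j jb]; first by rewrite addr_ge0 // ltW.
set y := D j *m map_mx ratr q.
have Dv_y : enorm (D j *m v - y) <= del / 4.
  rewrite -mulmxBr; apply: le_trans (D_le j _) _.
  have -> : del / 4 = tau * (del / (4 * tau)) by field; rewrite lt0r_neq0.
  by rewrite ler_wpM2l ?ltW.
have u_near : near_support Om y k.+1%:R^-1 (u j) by apply: ub; rewrite mem_iota.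
have r_ge0 : 0 <= k.+1%:R^-1 :> R by rewrite invr_ge0.
have := enorm_le_near_support Om0 Om_compact rho_ge0 r_ge0 (W_sub (Wv j)) u_near Dv_y.
by move: k_le; move: (k.+1%:R^-1) => r r_le h; lra.
Qed.

End Identification.

Lemma Delta_hpolyE (R : realType) T nx p (D : nat -> 'M[R]_(nx, p)) m
    (Pi : 'M[R]_(m, nx)) (pi : 'cV[R]_m) (w : nat -> T -> 'cV[R]_nx) ts j om :
  Delta D (hpoly Pi pi) w ts j om =
  hpoly (- (Pi *m D j.-1)) (pi - Pi *m (D j.-1 *m ts + w j.-1 om)).
Proof.
have affineE th : Pi *m (D j.-1 *m (ts - th) + w j.-1 om) =
    - (Pi *m D j.-1) *m th + Pi *m (D j.-1 *m ts + w j.-1 om).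
  by rewrite !mulmxDr !mulmxN mulNmx !mulmxA [LHS]addrAC [LHS]addrC.
by apply/seteqP; split => th /= h i; move: (h i); rewrite affineE !mxE; lra.
Qed.

Lemma hausdorff_cvg_Theta (R : realType) T nx p (Theta0 : set 'cV[R]_p)
    (D : nat -> 'M[R]_(nx, p)) m (Pi : 'M[R]_(m, nx)) (pi : 'cV[R]_m)
    (w : nat -> T -> 'cV[R]_nx) ts om :
  compact_polytope Theta0 ->
  hausdorff_cvg (fun t => Theta Theta0 D (hpoly Pi pi) w ts t om)
                (Theta_inf Theta0 D (hpoly Pi pi) w ts om).
Proof.
move=> [[m0 [A0 [b0 Theta0E]]] Theta0_compact].
apply: (hausdorff_cvg_bigcap Theta0_compact) => [t|t th []//|t th [Th0 th_Delta]].
- apply: closedI; first by rewrite Theta0E; exact: closed_hpoly.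
  rewrite (_ : [set th | _] = \bigcap_(j in [set j | (1 <= j <= t)%N]) Delta D (hpoly Pi pi) w ts j om).
    by apply: closed_bigI => j _; rewrite Delta_hpolyE; exact: closed_hpoly.
  by apply/seteqP; split => th /= h j; apply: h.
- by split=> // j /andP [j_ge1 j_le]; apply: th_Delta; rewrite j_ge1 ltnW.
Qed.

Lemma Theta_inf_Delta (R : realType) T nx p (Theta0 : set 'cV[R]_p)
    (D : nat -> 'M[R]_(nx, p)) W (w : nat -> T -> 'cV[R]_nx) ts om th :
  Theta_inf Theta0 D W w ts om th -> forall j, W (D j *m (ts - th) + w j om).
Proof. by move=> th_inf j; have [_ h] := th_inf j.+1 I; exact: (h j.+1 (leqnn _)). Qed.

Unset Implicit Arguments. Set Strict Implicit. Set Printing Implicit Defensive.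

Theorem corollary4 (R : realType) (d : measure_display) (T : measurableType d)
  (P : probability T R) (nx p : nat)
  (thetastar : 'cV[R]_p) (Theta0 : set 'cV[R]_p)
  (m : nat) (Pi_w : 'M[R]_(m, nx)) (pi_w : 'cV[R]_m)
  (w : nat -> T -> 'cV[R]_nx) (D : nat -> 'M[R]_(nx, p))
  (tau beta : R) (N_u : nat)
  (Om : set 'cV[R]_nx) (rho : R) (p_w : R -> R) :
  compact_polytope Theta0 -> Theta0 thetastar ->
  compact_polytope (hpoly Pi_w pi_w) -> (forall i, 0 < pi_w i 0) ->
  (forall t, random_vector (w t)) -> mutually_independent P w ->
  0 < tau -> 0 < beta -> (Num.ceil (p%:R / nx%:R : R) <= N_u%:Z)%R ->
  (forall t, opnorm_le (D t) tau) ->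
  (forall t, loewner_le (beta%:M)
     (\sum_(t <= j < t + N_u) (D j)^T *m D j)) ->
  compact Om -> 0 < rho ->
  Om `<=` hpoly Pi_w pi_w -> hpoly Pi_w pi_w `<=` minkowski_ball Om rho ->
  (forall t om, Om (w t om)) ->
  (forall e, 0 < e -> 0 < p_w e <= 1) ->
  (forall w0 e t, boundary Om w0 -> 0 < e ->
     ((p_w e)%:E <= P [set om | (enorm (w t om - w0) < e)%R])%E) ->
  {ae P, forall om,
     hausdorff_cvg (fun t => Theta Theta0 D (hpoly Pi_w pi_w) w thetastar t om)
                   (Theta_inf Theta0 D (hpoly Pi_w pi_w) w thetastar om) /\
     Theta_inf Theta0 D (hpoly Pi_w pi_w) w thetastar om `<=`
       [set theta | enorm (theta - thetastar) <= rho * Num.sqrt (N_u%:R / beta)]}.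
Proof.
move=> Theta0_poly _ _ _ w_rv w_indep tau_gt0 beta_gt0 _ D_le D_pe Om_compact rho_gt0
  _ W_sub w_Om p_w_in p_w_boundary.
have [om0 _] : [set: T] !=set0.
  apply/set0P/eqP => T0; have := probability_setT P; rewrite T0 measure0.
  by case=> /esym/eqP; rewrite oner_eq0.
have Om0 : Om !=set0 by exists (w 0%N om0).
have r_gt0 (k : nat) : 0 < k.+1%:R^-1 :> R by rewrite invr_gt0.
pose target (qk : 'cV[rat]_p * nat) j :=
  near_support Om (D j *m map_mx ratr qk.1) qk.2.+1%:R^-1.
have target_ge qk j : ((p_w qk.2.+1%:R^-1)%:E <= P (w j @^-1` target qk j))%E.
  have /andP [_ p_le1] := p_w_in _ (r_gt0 qk.2).
  rewrite /target /near_support; case: eqP => [_ | /eqP y_neq0].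
    by rewrite preimage_setT probability_setT lee_fin.
  apply: p_w_boundary (r_gt0 qk.2); apply: support_point_boundary Om0 Om_compact _.
  by rewrite lt_def y_neq0 enorm_ge0.
have never_null qk := never_block_negligible N_u w_rv w_indep
  (fun j => vborel_near_support _ _ _) (andP (p_w_in _ (r_gt0 qk.2))).1 (target_ge qk).
apply: negligibleS (negligible_bigcup_countable never_null) => om om_bad.
apply: contrapT => om_good; apply: om_bad; split.
  exact: hausdorff_cvg_Theta.
move=> th th_inf /=; rewrite enormB mulrC.
apply: (excited_enorm_le Om0 Om_compact W_sub (ltW rho_gt0) tau_gt0 beta_gt0 D_le D_pe
  _ (Theta_inf_Delta th_inf)) => q k.
apply: contrapT => never; apply: om_good; exists (q, k) => // b _ blk; apply: never.
by exists b.
Qed.
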